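(* Let $\delta_1,\delta_3$ be coprime positive integers, let $m\in\{1,\ldots,\max\{\delta_1,\delta_3\}\}$, and let $(x_{m1},x_{m3})$ be a B\'ezout couple of $m$ such that $(x_{m1},x_{m3})=(a_1,a_3)+(b_1,b_3)$ with integers $a_1,a_3,b_1,b_3$ satisfying $0<a_1\delta_1+a_3\delta_3<m$ and $0<b_1\delta_1+b_3\delta_3<m$. Then: (1) if $a_3\le-\delta_1$ then $a_1>\delta_3$; if moreover $\delta_3>\delta_1$, the converse also holds; (2) if $a_1\le-\delta_3$ then $a_3>\delta_1$; if moreover $\delta_1>\delta_3$, the converse also holds; (3) if $(x_{m1},x_{m3})$ is the $\lambda$-B\'ezout couple of $m$, then $a_3\le-\delta_1$ implies $\delta_1<b_3$, and $\delta_1<b_3$ implies $a_3<0$; (4) if $(x_{m1},x_{m3})$ is the $\lambda$-B\'ezout couple of $m$, then $a_1>\delta_3$ implies $b_1<-\delta_3$, and $b_1\le-\delta_3$ implies $0<a_1$; (5) if $(x_{m1},x_{m3})$ is the $\mu$-B\'ezout couple of $m$, then $a_1\le-\delta_3$ implies $\delta_3<b_1$, and $\delta_3<b_1$ implies $a_1<0$; (6) if $(x_{m1},x_{m3})$ is the $\mu$-B\'ezout couple of $m$, then $a_3>\delta_1$ implies $b_3<-\delta_1$, and $b_3\le-\delta_1$ implies $0<a_3$. All statements also hold with the roles of $(a_1,a_3)$ and $(b_1,b_3)$ interchanged.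
   Context: For $i\in\{1,\ldots,\max\{\delta_1,\delta_3\}\}$, the $\lambda$-B\'ezout couple of $i$ is the unique $(x,y)\in\mathbb Z^2$ with $x\delta_1+y\delta_3=i$ and $0<y\le\delta_1$; the $\mu$-B\'ezout couple of $i$ is the unique $(x,y)\in\mathbb Z^2$ with $x\delta_1+y\delta_3=i$ and $0<x\le\delta_3$. A B\'ezout couple of $i$ is either of these. *)

From Stdlib Require Import ZArith Lia.
Open Scope Z_scope.

Definition lambda_bezout (d1 d3 i x y : Z) : Prop :=
  x * d1 + y * d3 = i /\ 0 < y <= d1.

Definition mu_bezout (d1 d3 i x y : Z) : Prop :=
  x * d1 + y * d3 = i /\ 0 < x <= d3.

Definition bezout_couple (d1 d3 i x y : Z) : Prop :=
  lambda_bezout d1 d3 i x y \/ mu_bezout d1 d3 i x y.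

Definition lemma2p16_concl (d1 d3 m x1 x3 a1 a3 b1 b3 : Z) : Prop :=
  (a3 <= - d1 -> a1 > d3) /\ (d3 > d1 -> a1 > d3 -> a3 <= - d1) /\
  (a1 <= - d3 -> a3 > d1) /\ (d1 > d3 -> a3 > d1 -> a1 <= - d3) /\
  (lambda_bezout d1 d3 m x1 x3 ->
     (a3 <= - d1 -> d1 < b3) /\ (d1 < b3 -> a3 < 0)) /\
  (lambda_bezout d1 d3 m x1 x3 ->
     (a1 > d3 -> b1 < - d3) /\ (b1 <= - d3 -> 0 < a1)) /\
  (mu_bezout d1 d3 m x1 x3 ->
     (a1 <= - d3 -> d3 < b1) /\ (d3 < b1 -> a1 < 0)) /\
  (mu_bezout d1 d3 m x1 x3 ->
     (a3 > d1 -> b3 < - d1) /\ (b3 <= - d1 -> 0 < a3)).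

(* Write A := a1 d1 + a3 d3, with 0 < A < m <= max(d1, d3).  Parts (1) and (2)
   only concern A: since A > 0, a3 <= -d1 forces a1 > d3, and conversely when
   A < d3 (symmetrically for (2)).  Parts (3)-(6) only concern
   the Bezout couple: the bounded coordinate lies in (0, d1] (resp. (0, d3]),
   and since m <= max(d1, d3) the other one lies in (-d3, 0] (resp. (-d1, 0]);
   then b = x - a turns bounds on a coordinate of a into bounds on that of b. *)

From Stdlib Require Import ZArith Lia.
Open Scope Z_scope.

Lemma lincomb_pos_neg_coef (p q a c : Z) :
  0 < p -> 0 < q -> 0 < a * p + c * q -> c <= - p -> q < a.
Proof. intros; nia. Qed.

Lemma lincomb_small_neg_coef (p q a c : Z) :
  0 < p -> 0 < q -> a * p + c * q < q -> q < a -> c <= - p.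
Proof. intros; nia. Qed.

Lemma mu_bezout_swap (d1 d3 m x1 x3 : Z) :
  mu_bezout d1 d3 m x1 x3 <-> lambda_bezout d3 d1 m x3 x1.
Proof. unfold mu_bezout, lambda_bezout; lia. Qed.

Lemma lambda_bezout_fst_range (d1 d3 m x1 x3 : Z) :
  0 < d1 -> 0 < d3 -> 1 <= m <= Z.max d1 d3 ->
  lambda_bezout d1 d3 m x1 x3 -> - d3 < x1 <= 0.
Proof. intros Hd1 Hd3 Hm [Ex Hx3]; split; nia. Qed.

Lemma mu_bezout_snd_range (d1 d3 m x1 x3 : Z) :
  0 < d1 -> 0 < d3 -> 1 <= m <= Z.max d1 d3 ->
  mu_bezout d1 d3 m x1 x3 -> - d1 < x3 <= 0.
Proof.
  intros Hd1 Hd3 Hm Hmu; apply mu_bezout_swap in Hmu.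
  rewrite Z.max_comm in Hm; exact (lambda_bezout_fst_range _ _ _ _ _ Hd3 Hd1 Hm Hmu).
Qed.

Lemma lemma2p16_concl_of_summand (d1 d3 m x1 x3 a1 a3 b1 b3 : Z) :
  0 < d1 -> 0 < d3 -> 1 <= m <= Z.max d1 d3 ->
  x1 = a1 + b1 -> x3 = a3 + b3 ->
  0 < a1 * d1 + a3 * d3 < m ->
  lemma2p16_concl d1 d3 m x1 x3 a1 a3 b1 b3.
Proof.
  intros Hd1 Hd3 Hm -> -> [HA HAm].
  split; [|split; [|split; [|split; [|split; [|split; [|split]]]]]].
  - intros; apply Z.lt_gt, (lincomb_pos_neg_coef d1 d3 a1 a3); lia.
  - intros Hd31 Ha1; rewrite Z.max_r in Hm by lia.
    apply (lincomb_small_neg_coef d1 d3 a1 a3); lia.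
  - intros; apply Z.lt_gt, (lincomb_pos_neg_coef d3 d1 a3 a1); lia.
  - intros Hd13 Ha3; rewrite Z.max_l in Hm by lia.
    apply (lincomb_small_neg_coef d3 d1 a3 a1); lia.
  - intros [_ Hx3]; lia.
  - intros Hl; pose proof (lambda_bezout_fst_range _ _ _ _ _ Hd1 Hd3 Hm Hl); lia.
  - intros [_ Hx1]; lia.
  - intros Hmu; pose proof (mu_bezout_snd_range _ _ _ _ _ Hd1 Hd3 Hm Hmu); lia.
Qed.

Theorem lemma2p16 (d1 d3 m x1 x3 a1 a3 b1 b3 : Z) :
  0 < d1 -> 0 < d3 -> Z.gcd d1 d3 = 1 ->
  1 <= m <= Z.max d1 d3 ->
  bezout_couple d1 d3 m x1 x3 ->
  x1 = a1 + b1 -> x3 = a3 + b3 ->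
  0 < a1 * d1 + a3 * d3 < m ->
  0 < b1 * d1 + b3 * d3 < m ->
  lemma2p16_concl d1 d3 m x1 x3 a1 a3 b1 b3 /\
  lemma2p16_concl d1 d3 m x1 x3 b1 b3 a1 a3.
Proof.
  intros Hd1 Hd3 _ Hm _ E1 E3 HA HB.
  split; apply lemma2p16_concl_of_summand; auto; lia.
Qed.
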